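(* For any integers $n\ge g\ge1$, $\Delta\big(\tfrac{R(g,n)}{n}\big)\le\tfrac gn$.
   Context: A set $S$ of integers is a $B^*[g]$ set if for every integer $m$ there are at most $g$ ordered pairs $(s_1,s_2)\in S\times S$ with $s_1+s_2=m$. $R(g,n)$ is the maximum cardinality of a $B^*[g]$ set contained in $\{1,2,\dots,n\}$. Let $\lambda$ be Lebesgue measure; a set $C\subseteq\mathbb{R}$ is symmetric if there is $c$ with $c+x\in C\iff c-x\in C$; $D(A):=\sup\{\lambda(C): C\subseteq A \text{ measurable and symmetric}\}$, and $\Delta(\varepsilon):=\inf\{D(A): A\subseteq[0,1) \text{ measurable},\ \lambda(A)=\varepsilon\}$ for $0\le\varepsilon\le1$. *)

From mathcomp Require Import all_boot all_order all_algebra.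
From mathcomp Require Import all_classical all_reals all_analysis.
Set Implicit Arguments. Unset Strict Implicit. Unset Printing Implicit Defensive.
Import Order.TTheory GRing.Theory Num.Theory.
Local Open Scope classical_set_scope.
Local Open Scope ring_scope.

(* B*[g] sets inside {1,...,n}: S is a subset of 'I_(n.+1) not containing 0. *)
Definition Bstar (g n : nat) (S : {set 'I_n.+1}) : Prop :=
  forall m : int,
    (#|[set p : 'I_n.+1 * 'I_n.+1 |
        [&& p.1 \in S, p.2 \in S & ((p.1 + p.2)%N%:Z == m)]]| <= g)%N.

Definition Rgn (g n : nat) : nat :=
  (\max_(S : {set 'I_n.+1} | `[< (ord0 \notin S) /\ Bstar g S >]) #|S|)%N.

Definition LebT (R : realType) := caratheodory_type ((@lebesgue_measure R)^*)%mu.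
Definition Lmeasurable (R : realType) (A : set R) : Prop :=
  measurable (A : set (LebT R)).
Definition lam (R : realType) (A : set R) : \bar R :=
  @completed_lebesgue_measure R (A : set (LebT R)).

Definition symmetric_set (R : realType) (C : set R) : Prop :=
  exists c : R, forall x : R, C (c + x) <-> C (c - x).

Definition Dsym (R : realType) (A : set R) : \bar R :=
  ereal_sup [set lam C | C in
     [set C : set R | [/\ Lmeasurable C, C `<=` A & symmetric_set C]]].

Definition Delta (R : realType) (eps : R) : \bar R :=
  ereal_inf [set Dsym A | A in
     [set A : set R | [/\ Lmeasurable A, A `<=` [set x | 0 <= x < 1]
                        & lam A = eps%:E]]].

From mathcomp Require Import all_boot all_order all_algebra.
From mathcomp Require Import all_classical all_reals all_analysis.
From mathcomp Require Import lra zify.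

Set Implicit Arguments.
Unset Strict Implicit.
Unset Printing Implicit Defensive.
Import Order.TTheory GRing.Theory Num.Theory.
Local Open Scope classical_set_scope.
Local Open Scope ring_scope.

(* Let S be a B*[g] set of maximal size R(g,n) in {1,...,n} and let A be the
   union of the cells [(i-1)/n, i/n[ for i in S, so that lambda(A) = R(g,n)/n.
   A subset C of A symmetric about c lies in A and in 2c - A, hence in the
   union of the overlaps of cell i with the reflected cell 2c - cell j for
   i, j in S.  Such an overlap has length tent(i + j - u)/n, where
   u = 2cn + 1 and tent x = max(0, 1 - |x|).  As a function of the integer
   i + j these weights vanish except at the two integers k = floor u and k + 1,
   where they are 1 - (u - k) and u - k; since each value of i + j is taken
   by at most g ordered pairs, lambda(C) <= g/n. *)

Lemma bigsetU_condP (T : Type) (I : finType) (P : {pred I}) (F : I -> set T) x :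
  (\big[setU/set0]_(i | P i) F i) x <-> exists2 i, P i & F i x.
Proof.
rewrite -bigcup_seq_cond.
split=> [[i /andP[_ Pi] Fix]|[i Pi Fix]]; exists i => //.
by rewrite /= mem_index_enum.
Qed.

Lemma content_sub_bigsetU d (T : semiRingOfSetsType d) (R : realFieldType)
    (mu : {content set T -> \bar R}) (I : finType) (P : {pred I})
    (F : I -> set T) (A : set T) :
  (forall i, P i -> measurable (F i)) -> measurable A ->
  A `<=` \big[setU/set0]_(i | P i) F i ->
  (mu A <= \sum_(i | P i) mu (F i))%E.
Proof.
move=> mF mA AF.
rewrite bigfs; last 2 first.
- exact: index_enum_uniq.
- by move=> i _; rewrite mem_index_enum.
apply: content_sub_fsum => //.
by move=> x /AF/bigsetU_condP.
Qed.

Definition tent {R : numDomainType} (x : R) : R := Num.max 0 (1 - `|x|).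

Lemma tent_le_weights (R : realDomainType) (k m : int) (v : R) :
  0 <= v -> v < 1 ->
  tent (m%:~R - (k%:~R + v)) <= (1 - v) * (m == k)%:R + v * (m == k + 1)%:R.
Proof.
move=> v_ge0 v_lt1.
have ge_mu := ler_norm (m%:~R - (k%:~R + v)).
have ge_um : k%:~R + v - m%:~R <= `|m%:~R - (k%:~R + v)|.
  by rewrite -normrN opprB ler_norm.
rewrite /tent ge_max.
have [km|mk] := eqVneq m k.
  subst m; have -> : (k == k + 1) = false by lia.
  by rewrite /=; apply/andP; split; lra.
have [km|mk1] := eqVneq m (k + 1).
  subst m; rewrite intrD in ge_mu ge_um *.
  by rewrite /=; apply/andP; split; lra.
rewrite /= !mulr0 addr0 lexx /=.
have [m_lt|m_gt] : (m <= k - 1)%R \/ (k + 2 <= m)%R by lia.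
- by move: m_lt; rewrite -(ler_int R) intrB; lra.
- by move: m_gt; rewrite -(ler_int R) intrD; lra.
Qed.

Lemma Bstar_sum_tent_le (R : archiRealFieldType) (g n : nat)
    (S : {set 'I_n.+1}) (u : R) :
  Bstar g S ->
  \sum_(p : 'I_n.+1 * 'I_n.+1 | (p.1 \in S) && (p.2 \in S))
     tent ((p.1 + p.2)%N%:R - u) <= g%:R.
Proof.
move=> SB; set k := Num.floor u; set v := u - k%:~R.
have v_ge0 : 0 <= v by rewrite subr_ge0 floor_le.
have v_lt1 : v < 1 by rewrite ltrBlDl -[1]/(1%:~R) -intrD floorD1_gt.
have count m : \sum_(p | (p.1 \in S) && (p.2 \in S))
    (((p.1 + p.2)%N%:Z == m)%:R : R) =
    #|[set p : 'I_n.+1 * 'I_n.+1 |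
        [&& p.1 \in S, p.2 \in S & (p.1 + p.2)%N%:Z == m]]|%:R.
  pose ind (p : 'I_n.+1 * 'I_n.+1) : R :=
    if (p.1 + p.2)%N%:Z == m then 1 else 0.
  rewrite (eq_bigr ind).
    rewrite -big_mkcondr sumr_const; congr _%:R; apply: eq_card => p.
    by rewrite [RHS]inE /= asboolb [LHS]unfold_in andbA.
  by move=> p _; rewrite /ind; case: eqP.
have u_eq : u = k%:~R + v by rewrite addrC subrK.
apply: (@le_trans _ _ (\sum_(p | (p.1 \in S) && (p.2 \in S))
    ((1 - v) * (((p.1 + p.2)%N%:Z == k)%:R : R)
     + v * ((p.1 + p.2)%N%:Z == k + 1)%:R))).
  apply: ler_sum => p _; rewrite u_eq [X in tent (X - _)]pmulrn.
  exact: tent_le_weights.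
rewrite big_split /= -!mulr_sumr !count.
move: (SB k) (SB (k + 1)); rewrite -!(ler_nat R) => card_k card_k1.
apply: le_trans (lerD (ler_wpM2l _ card_k) (ler_wpM2l _ card_k1)) _.
- by rewrite subr_ge0 ltW.
- exact: v_ge0.
by rewrite -mulrDl subrK mul1r.
Qed.

(* Both sides are the Lebesgue outer measure of A, whether or not A is
   measurable. *)
Lemma lamE (R : realType) (A : set R) : lam A = lebesgue_measure A.
Proof. by []. Qed.

Lemma le_lam (R : realType) (A B : set R) : A `<=` B -> (lam A <= lam B)%E.
Proof. exact: (le_mu_ext (wlength idfun)). Qed.

Lemma measurable_Lmeasurable (R : realType) (A : set R) :
  measurable A -> Lmeasurable A.
Proof. by move=> mA; apply: sub_caratheodory; exact: sub_sigma_algebra. Qed.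

Lemma symmetric_set_reflect (R : realType) (C : set R) :
  symmetric_set C -> exists t, forall x, C x -> C (t - x).
Proof.
move=> [c Csym]; exists (c + c) => x Cx.
by have := (Csym (x - c)).1; rewrite addrC subrK opprB addrA => /(_ Cx).
Qed.

Section Cells.
Variables (R : realType) (n : nat).
Hypothesis n_gt0 : (0 < n)%N.

Let n_pos : (0 : R) < n%:R. Proof. by rewrite ltr0n. Qed.

Definition cell (i : nat) : set R := `[(i%:R - 1) / n%:R, i%:R / n%:R[.

Lemma cellP i x : cell i x <-> i%:R - 1 <= x * n%:R < i%:R.
Proof. by rewrite /cell /= in_itv /= ler_pdivrMr // ltr_pdivlMr. Qed.

Lemma measurable_cell i : measurable (cell i).
Proof. exact: measurable_itv. Qed.

Lemma lebesgue_measure_cell i : lebesgue_measure (cell i) = (n%:R^-1)%:E.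
Proof.
rewrite lebesgue_measure_itv /= lte_fin ltr_pM2r ?invr_gt0 //.
rewrite ltrBlDr ltrDl ltr01.
by rewrite -EFinD -mulrBl opprB addrC subrK mul1r.
Qed.

Lemma cell_disjoint i j x : cell i x -> cell j x -> i = j.
Proof.
move=> /cellP/andP[lo_i hi_i] /cellP/andP[lo_j hi_j].
have : (i%:R < j.+1%:R :> R) /\ (j%:R < i.+1%:R :> R) by rewrite -!natr1; lra.
by rewrite !ltr_nat !ltnS => -[ij ji]; apply/eqP; rewrite eqn_leq ij ji.
Qed.

Definition cells (S : {set 'I_n.+1}) : set R :=
  \big[setU/set0]_(i | i \in S) cell i.

Lemma measurable_cells S : measurable (cells S).
Proof. by apply: bigsetU_measurable => i _; exact: measurable_cell. Qed.

Lemma lebesgue_measure_cells S :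
  lebesgue_measure (cells S) = (#|S|%:R / n%:R)%:E.
Proof.
rewrite measure_bigsetU_ord.
- rewrite (eq_bigr (fun=> (n%:R^-1)%:E)) => [|i _]; last first.
    exact: lebesgue_measure_cell.
  by rewrite sumEFin sumr_const mulr_natl.
- by move=> i; exact: measurable_cell.
- by move=> i j _ _ [x [/cell_disjoint cij /cij/val_inj]].
Qed.

Lemma cells_sub_unit_itv (S : {set 'I_n.+1}) :
  ord0 \notin S -> cells S `<=` [set x | 0 <= x < 1].
Proof.
move=> S0 x /bigsetU_condP[i iS /cellP/andP[lo hi]].
have i_ge1 : 1 <= i%:R :> R.
  rewrite ler1n lt0n; apply: contraNneq S0 => i0.
  by rewrite (_ : ord0 = i) //; exact: val_inj.
have i_len : i%:R <= n%:R :> R by rewrite ler_nat -ltnS.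
rewrite /= -(pmulr_lge0 _ n_pos) -(ltr_pM2r n_pos) mul1r.
by apply/andP; split; lra.
Qed.

Lemma lebesgue_measure_scaled_overlap (a b : R) :
  (lebesgue_measure
     (`[a / n%:R, (a + 1) / n%:R] `&` `[b / n%:R, (b + 1) / n%:R])%R
   <= (tent (a - b) / n%:R)%:E)%E.
Proof.
set lo := Num.max a b; set hi := Num.min (a + 1) (b + 1).
have sub : `[a / n%:R, (a + 1) / n%:R] `&` `[b / n%:R, (b + 1) / n%:R]
    `<=` (`[lo / n%:R, hi / n%:R] : set R).
  move=> x []; rewrite /= !in_itv /= !ler_pdivrMr // !ler_pdivlMr //.
  by rewrite ge_max le_min => /andP[-> ->] /andP[-> ->].
apply: (@le_trans _ _ (lebesgue_measure (`[lo / n%:R, hi / n%:R] : set R))).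
  apply: le_measure; rewrite // inE; last exact: measurable_itv.
  by apply: measurableI; exact: measurable_itv.
have tent_ge : 0 <= tent (a - b) /\ 1 - `|a - b| <= tent (a - b).
  by split; rewrite /tent le_max lexx ?orbT.
rewrite lebesgue_measure_itv /= lte_fin.
case: ifPn => _; last first.
  by rewrite -[0%R]/(0%:E) lee_fin divr_ge0 ?(ltW n_pos) ?tent_ge.1.
rewrite -EFinD lee_fin -mulrBl ler_wpM2r ?invr_ge0 ?(ltW n_pos) //.
apply: le_trans (proj2 tent_ge); rewrite /lo /hi.
have [ab|ba] := leP a b.
- rewrite min_l ?lerD2r // ler0_norm ?subr_le0 //; lra.
- rewrite min_r ?lerD2r ?(ltW ba) // gtr0_norm ?subr_gt0 //; lra.
Qed.

(* A closed interval containing cell i `&` [set x | cell j (t - x)]. *)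
Definition cell_overlap (t : R) (i j : nat) : set R :=
  `[(i%:R - 1) / n%:R, i%:R / n%:R] `&`
  `[(n%:R * t - j%:R) / n%:R, (n%:R * t - j%:R + 1) / n%:R].

Lemma measurable_cell_overlap t i j : measurable (cell_overlap t i j).
Proof. by apply: measurableI; exact: measurable_itv. Qed.

Lemma sub_cell_overlap t i j x :
  cell i x -> cell j (t - x) -> cell_overlap t i j x.
Proof.
move=> /cellP/andP[lo_i hi_i] /cellP/andP[lo_j hi_j].
rewrite /cell_overlap /= !in_itv /= !ler_pdivrMr // !ler_pdivlMr //.
by split; apply/andP; split; lra.
Qed.

Lemma lebesgue_measure_cell_overlap t i j :
  (lebesgue_measure (cell_overlap t i j)
   <= (tent ((i + j)%N%:R - (n%:R * t + 1)) / n%:R)%:E)%E.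
Proof.
rewrite (_ : _ - _ = i%:R - 1 - (n%:R * t - j%:R)); last by rewrite natrD; lra.
have := lebesgue_measure_scaled_overlap (i%:R - 1) (n%:R * t - j%:R).
by rewrite subrK.
Qed.

Lemma sub_cell_overlaps (S : {set 'I_n.+1}) t (C : set R) :
  (forall x, C x -> C (t - x)) -> C `<=` cells S ->
  C `<=` \big[setU/set0]_(p | (p.1 \in S) && (p.2 \in S))
            cell_overlap t p.1 p.2.
Proof.
move=> Ct CS x Cx.
have /bigsetU_condP[i iS cix] := CS x Cx.
have /bigsetU_condP[j jS cjx] := CS _ (Ct x Cx).
apply/bigsetU_condP; exists (i, j); first by rewrite iS jS.
exact: sub_cell_overlap.
Qed.

Lemma Dsym_cells_le g (S : {set 'I_n.+1}) :
  Bstar g S -> (Dsym (cells S) <= (g%:R / n%:R)%:E)%E.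
Proof.
move=> SB; apply: ge_ereal_sup => _ [C [_ CS /symmetric_set_reflect[t Ct]] <-].
apply: le_trans (le_lam (sub_cell_overlaps Ct CS)) _; rewrite lamE.
apply: le_trans (content_sub_bigsetU lebesgue_measure
  (P := fun p : 'I_n.+1 * 'I_n.+1 => (p.1 \in S) && (p.2 \in S))
  (F := fun p => cell_overlap t p.1 p.2) _ _ _) _ => //.
- by move=> p _; exact: measurable_cell_overlap.
- by apply: bigsetU_measurable => p _; exact: measurable_cell_overlap.
apply: (@le_trans _ _ (\sum_(p | (p.1 \in S) && (p.2 \in S))
    (tent ((p.1 + p.2)%N%:R - (n%:R * t + 1)) / n%:R)%:E)).
  by apply: lee_sum => p _; exact: lebesgue_measure_cell_overlap.
rewrite sumEFin lee_fin -mulr_suml ler_wpM2r ?invr_ge0 ?(ltW n_pos) //.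
exact: Bstar_sum_tent_le.
Qed.

End Cells.

Lemma Bstar_set0 g n : Bstar g (finset.set0 : {set 'I_n.+1}).
Proof.
by move=> m; rewrite eq_card0 // => p; rewrite [LHS]inE /= asboolb !inE.
Qed.

Lemma Rgn_witness g n :
  exists S : {set 'I_n.+1}, [/\ ord0 \notin S, Bstar g S & #|S| = Rgn g n].
Proof.
pose admissible (S : {set 'I_n.+1}) := `[< ord0 \notin S /\ Bstar g S >].
have [|S /asboolP[S0 SB] SE] := @eq_bigmax_cond _ admissible (fun S => #|S|).
  apply/card_gt0P; exists finset.set0; rewrite /in_mem /=; apply/asboolP.
  by split; [rewrite inE | exact: Bstar_set0].
by exists S; split; rewrite // /Rgn SE.
Qed.

Theorem proposition3p1 (R : realType) (g n : nat) :
  (1 <= g)%N -> (g <= n)%N ->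
  (Delta ((Rgn g n)%:R / n%:R : R) <= (g%:R / n%:R : R)%:E)%E.
Proof.
move=> g_ge1 g_le_n; have n_gt0 : (0 < n)%N := leq_trans g_ge1 g_le_n.
have [S [S0 SB <-]] := Rgn_witness g n.
apply: le_trans (Dsym_cells_le R n_gt0 SB).
apply: ereal_inf_lbound; exists (cells S) => //; split.
- by apply: measurable_Lmeasurable; exact: measurable_cells.
- exact: cells_sub_unit_itv.
- by rewrite lamE lebesgue_measure_cells.
Qed.
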